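(* Let $X=(A_1,\dots,A_k)$ be a Markov tree-shift over $\mathcal{A}=\{0,\dots,d-1\}$. Then $$\limsup_{n\to\infty}\frac{\log p(n)}{1+k+\cdots+k^n}\le\frac1k\Big(\log d+\log\|A_1\|_{op}+\cdots+\log\|A_k\|_{op}\Big),$$ so in particular $h_{PS}(X)\le\frac1k(\log d+\sum_{m=1}^k\log\|A_m\|_{op})$ whenever $h_{PS}(X)$ exists.
   Context: $\Sigma=\{a_1,\dots,a_k\}$, $k\ge2$. For $\{0,1\}$-valued $d\times d$ matrices $A_1,\dots,A_k$ (each row and column of each containing at least one $1$), $X=(A_1,\dots,A_k)$ is the set of trees $t:\Sigma^*\to\mathcal{A}$ with $(A_m)_{t_x,t_{xa_m}}=1$ for all nodes $x$ and all $m$. $p(n)$ is the number of allowed blocks of length $n$ (labellings $t|_{\Delta_n}$, $t\in X$, $\Delta_n=\bigcup_{i=0}^n\Sigma^i$). $h_{PS}(X)=\lim_n\frac{\log p(n)}{1+k+\cdots+k^n}$. $\|M\|_{op}=\sup_{\|v\|_\infty=1}\|Mv\|_\infty$ with $\|v\|_\infty=\max_i|v_i|$; for a nonnegative matrix this is the maximal row sum. *)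

From HB Require Import structures.
From mathcomp Require Import all_boot all_order all_algebra.
From mathcomp Require Import all_classical all_reals all_analysis.
Set Implicit Arguments. Unset Strict Implicit. Unset Printing Implicit Defensive.
Import Order.TTheory GRing.Theory Num.Theory.

(* Alphabet Sigma = 'I_k (a_{m+1} <-> m), symbols A = 'I_d.
   Nodes of the tree are words seq 'I_k; the child x a_m is rcons x m. *)

Definition markov_mx (d : nat) (M : 'M[nat]_d) : Prop :=
  (forall i j, M i j <= 1)%N /\
  (forall i, exists j, M i j = 1%N) /\
  (forall j, exists i, M i j = 1%N).

Definition in_tree_shift (k d : nat) (A : 'I_k -> 'M[nat]_d)
  (t : seq 'I_k -> 'I_d) : Prop :=
  forall (x : seq 'I_k) (m : 'I_k), A m (t x) (t (rcons x m)) = 1%N.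

(* Delta_n = union of Sigma^i for i = 0..n, as a finite type. *)
Definition Delta (k n : nat) := {i : 'I_n.+1 & i.-tuple 'I_k}.

Definition Delta_word (k n : nat) (w : Delta k n) : seq 'I_k := tval (tagged w).

Definition num_blocks (k d : nat) (A : 'I_k -> 'M[nat]_d) (n : nat) : nat :=
  #|[set b : {ffun Delta k n -> 'I_d} |
      `[< exists t, in_tree_shift A t /\ forall w, b w = t (Delta_word w) >]]|.

(* Operator norm induced by the sup norm; for a nonnegative matrix this is
   the maximal row sum. *)
Definition opnorm (d : nat) (M : 'M[nat]_d) : nat :=
  \max_(i < d) \sum_(j < d) M i j.

From HB Require Import structures.
From mathcomp Require Import all_boot all_order all_algebra.
From mathcomp Require Import all_classical all_reals all_analysis.
From mathcomp Require Import ring lra.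
Import Order.TTheory GRing.Theory Num.Theory.
Set Implicit Arguments. Unset Strict Implicit.

(* A block of X of height n+1 is determined by the symbol at the root
   together with, for every node x of height at most n and every letter a_m,
   the rank of the symbol at x a_m among the A_m-successors of the symbol at
   x; that rank is smaller than the number of ones in a row of A_m, hence
   smaller than ||A_m||.  Counting these codes gives
       p(n+1) <= d * (prod_m ||A_m||) ^ |Delta_n|,
   and since |Delta_(n+1)| = 1 + k |Delta_n|, taking logarithms yields
       log p(n+1) / |Delta_(n+1)| <= (log d + sum_m log ||A_m||) / k
   for every n; the limsup is then bounded by the same constant. *)

Definition successors (d : nat) (M : 'M[nat]_d) (i : 'I_d) : seq 'I_d :=
  [seq j <- enum 'I_d | M i j == 1%N].

Definition succ_rank (d : nat) (M : 'M[nat]_d) (i j : 'I_d) : nat :=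
  index j (successors M i).

Lemma mem_successors d (M : 'M[nat]_d) i j : (j \in successors M i) = (M i j == 1%N).
Proof. by rewrite mem_filter mem_enum andbT. Qed.

Lemma size_successors d (M : 'M[nat]_d) i :
  (forall i j, M i j <= 1)%N -> (size (successors M i) <= opnorm M)%N.
Proof.
move=> M01; apply: (@leq_trans (\sum_(j < d) M i j)).
  rewrite size_filter -sum1_count big_mkcond /= -big_enum /=.
  by apply: leq_sum => j _; case: eqP => [->|].
exact: (leq_bigmax (F := fun i => \sum_(j < d) M i j)).
Qed.

Lemma succ_rank_lt_opnorm d (M : 'M[nat]_d) i j :
  (forall i j, M i j <= 1)%N -> M i j = 1%N -> (succ_rank M i j < opnorm M)%N.
Proof.
move=> M01 Mij; apply: leq_trans (size_successors i M01).
by rewrite index_mem mem_successors Mij.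
Qed.

Lemma succ_rank_le d (M : 'M[nat]_d) i j : (succ_rank M i j <= d)%N.
Proof.
apply: leq_trans (index_size _ _) _.
by rewrite size_filter (leq_trans (count_size _ _)) // size_enum_ord.
Qed.

Lemma succ_rank_inj d (M : 'M[nat]_d) i j j' : M i j = 1%N -> M i j' = 1%N ->
  succ_rank M i j = succ_rank M i j' -> j = j'.
Proof.
move=> Mij Mij' eq_rank.
have sj : j \in successors M i by rewrite mem_successors Mij.
have sj' : j' \in successors M i by rewrite mem_successors Mij'.
by rewrite -(nth_index j sj) -(nth_index j sj') [index j _]eq_rank.
Qed.

Lemma opnorm_gt0 d (M : 'M[nat]_d) : (0 < d)%N -> markov_mx M -> (0 < opnorm M)%N.
Proof.
move=> d_gt0 [_ [rows _]]; have [j Mj] := rows (Ordinal d_gt0).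
apply: leq_trans (leq_bigmax (F := fun i => \sum_(j < d) M i j) (Ordinal d_gt0)).
by rewrite (bigD1 j) //= Mj.
Qed.

Lemma size_Delta_word k n (w : Delta k n) : (size (Delta_word w) <= n)%N.
Proof. by case: w => i t; rewrite /Delta_word /= size_tuple -ltnS. Qed.

Lemma Delta_wordP k n (s : seq 'I_k) : (size s <= n)%N ->
  exists w : Delta k n, Delta_word w = s.
Proof.
by move=> s_le; exists (existT (fun i : 'I_n.+1 => i.-tuple 'I_k)
  (Ordinal (s_le : (size s < n.+1)%N)) (in_tuple s)).
Qed.

Definition Delta_root (k n : nat) : Delta k n :=
  existT (fun i : 'I_n.+1 => i.-tuple 'I_k) ord0 [tuple].

(* The symbol a block b carries at the node s (meaningful when |s| <= n). *)
Definition block_at (k n d : nat) (b : {ffun Delta k n -> 'I_d}) (s : seq 'I_k) : 'I_d :=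
  if [pick w | Delta_word w == s] is Some w then b w else b (Delta_root k n).

Lemma block_atE k n d (b : {ffun Delta k n -> 'I_d}) (t : seq 'I_k -> 'I_d) s :
  (forall w, b w = t (Delta_word w)) -> (size s <= n)%N -> block_at b s = t s.
Proof.
move=> bt s_le; rewrite /block_at; case: pickP => [w /eqP <-|no_w]; first exact: bt.
by have [w ws] := Delta_wordP s_le; move: (no_w w); rewrite ws eqxx.
Qed.

Lemma card_ord_lt n N : (#|[pred v : 'I_n | (v < N)%N]| <= N)%N.
Proof.
rewrite cardE -(size_map val) -[X in (_ <= X)%N](size_iota 0 N).
apply: uniq_leq_size.
  by rewrite map_inj_uniq ?enum_uniq //; exact: val_inj.
by move=> x /mapP [v]; rewrite mem_enum inE => v_lt ->; rewrite mem_iota.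
Qed.

Section BlockCode.
Variables (k d n : nat) (A : 'I_k -> 'M[nat]_d).

Definition allowed_blocks := [set b : {ffun Delta k n.+1 -> 'I_d} |
  `[< exists t, in_tree_shift A t /\ forall w, b w = t (Delta_word w) >]].

Definition block_code (b : {ffun Delta k n.+1 -> 'I_d}) :
    'I_d * {ffun Delta k n * 'I_k -> 'I_d.+1} :=
  (block_at b [::], [ffun p : Delta k n * 'I_k =>
     inord (succ_rank (A p.2) (block_at b (Delta_word p.1))
                             (block_at b (rcons (Delta_word p.1) p.2)))]).

Lemma block_code_inj : {in allowed_blocks &, injective block_code}.
Proof.
move=> b1 b2; rewrite !inE => -[t1 [X1 b1t]] [t2 [X2 b2t]] same.
suff t12 s : (size s <= n.+1)%N -> t1 s = t2 s.
  by apply/ffunP => w; rewrite b1t b2t t12 // size_Delta_word.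
elim/last_ind: s => [_|x m IHx]; first by move: (congr1 fst same) => /=;
  rewrite (block_atE b1t) // (block_atE b2t).
rewrite size_rcons ltnS => x_le_n; have x_le := leqW x_le_n.
have [w wx] := Delta_wordP x_le_n.
have := congr1 (fun c : 'I_d * {ffun Delta k n * 'I_k -> 'I_d.+1} =>
  val (c.2 (w, m))) same.
rewrite !ffunE /= wx !(block_atE b1t) ?(block_atE b2t) ?size_rcons //.
rewrite !inordK ?ltnS ?succ_rank_le // IHx // => eq_rank.
by apply: succ_rank_inj eq_rank; [rewrite -IHx | ].
Qed.

Hypothesis markovA : forall m, markov_mx (A m).

Definition rank_bounded (p : Delta k n * 'I_k) : pred 'I_d.+1 :=
  [pred v : 'I_d.+1 | (v < opnorm (A p.2))%N].

Lemma block_code_bounded b : b \in allowed_blocks ->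
  (block_code b).2 \in family rank_bounded.
Proof.
rewrite inE => /asboolP [t [Xt bt]]; apply/forallP => p.
have h := size_Delta_word p.1.
rewrite ffunE inE inordK ?ltnS ?succ_rank_le //.
rewrite !(block_atE bt) ?size_rcons ?(leq_trans h) //.
by apply: succ_rank_lt_opnorm; [exact: (markovA _).1 | exact: Xt].
Qed.

Lemma num_blocks_succ_le :
  (num_blocks A n.+1 <= d * (\prod_m opnorm (A m)) ^ #|{: Delta k n}|)%N.
Proof.
rewrite /num_blocks -/allowed_blocks -(card_in_imset block_code_inj).
pose codes := finset.setX [set: 'I_d] [set f | f \in family rank_bounded].
apply: leq_trans (subset_leq_card (_ : _ \subset codes)) _.
  apply/fintype.subsetP => _ /imsetP [b bX ->].
  by rewrite finset.in_setX finset.in_setT finset.in_set block_code_bounded.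
rewrite cardsX cardsT card_ord leq_mul2l cardsE card_family foldrE big_map.
rewrite big_enum /= -[X in (_ <= X ^ _)%N]/(\prod_m opnorm (A m))%N.
rewrite -prod_nat_const pair_big /=.
by apply/orP; right; apply: leq_prod => p _; exact: card_ord_lt.
Qed.
End BlockCode.

Lemma card_Delta k n : #|{: Delta k n}| = (\sum_(i < n.+1) k ^ i)%N.
Proof.
rewrite card_tagged sumnE big_map big_enum /=.
by apply: eq_bigr => i _; rewrite card_tuple card_ord.
Qed.

Lemma card_Delta_succ k n : #|{: Delta k n.+1}| = (1 + k * #|{: Delta k n}|)%N.
Proof.
rewrite !card_Delta big_ord_recl expn0 big_distrr /=; congr (_ + _)%N.
by apply: eq_bigr => i _; rewrite /bump /= expnS.
Qed.

Local Open Scope ring_scope.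

Lemma limn_esup_le_succ (R : realType) (u : (\bar R)^nat) (c : \bar R) :
  (forall n, u n.+1 <= c)%E -> (limn_esup u <= c)%E.
Proof.
move=> uc; rewrite limn_esup_lim; apply: lime_le; first exact: is_cvg_esups.
exists 1%N => // m m_gt0; apply: ge_ereal_sup => _ [[|n] /= mn <-]; last exact: uc.
by move: (leq_trans m_gt0 mn).
Qed.

Lemma ln_prod (R : realType) (I : finType) (F : I -> R) :
  (forall i, 0 < F i) -> ln (\prod_i F i) = \sum_i ln (F i).
Proof.
move=> F_gt0; suff [] : 0 < \prod_i F i /\ ln (\prod_i F i) = \sum_i ln (F i) by [].
apply: (big_rec2 (fun x y => 0 < y /\ ln y = x)); first by rewrite ln1.
by move=> i x y _ [y_gt0 <-]; rewrite mulr_gt0 // lnM // posrE.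
Qed.

Lemma ln_count_le (R : realType) (I : finType) (p d S : nat) (N : I -> nat) :
  (0 < d)%N -> (forall i, 0 < N i)%N -> (p <= d * (\prod_i N i) ^ S)%N ->
  ln (p%:R : R) <= ln (d%:R : R) + S%:R * \sum_i ln ((N i)%:R : R).
Proof.
move=> d_gt0 N_gt0 p_le.
have prod_gt0 : (0 < \prod_i N i)%N by rewrite prodn_gt0.
have [->|p_gt0] := posnP p.
  rewrite ln0 // addr_ge0 ?ln_ge0 ?ler1n // mulr_ge0 // sumr_ge0 // => i _.
  by rewrite ln_ge0 ?ler1n.
apply: le_trans (_ : ln ((d * (\prod_i N i) ^ S)%N%:R) <= _).
  by rewrite ler_ln ?posrE ?ltr0n ?muln_gt0 ?expn_gt0 ?d_gt0 ?prod_gt0 // ler_nat.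
rewrite natrM lnM ?posrE ?ltr0n ?expn_gt0 ?prod_gt0 // natrX lnXn ?ltr0n //.
by rewrite natr_prod ln_prod ?mulr_natl // => i; rewrite ltr0n.
Qed.

Lemma ratio_le (R : realFieldType) (k S a q : R) :
  1 <= k -> 1 <= S -> 0 <= a -> 0 <= q ->
  (a + S * q) / (1 + k * S) <= k^-1 * (a + q).
Proof.
move=> k_ge1 S_ge1 a_ge0 q_ge0.
have k_gt0 : 0 < k by apply: lt_le_trans k_ge1.
rewrite ler_pdivrMr; last by rewrite ltr_pwDl // mulr_ge0 // ltW // (lt_le_trans ltr01).
have -> : k^-1 * (a + q) * (1 + k * S) = k^-1 * (a + q) + S * (a + q).
  by field; rewrite gt_eqF.
have : 0 <= k^-1 * (a + q) by rewrite mulr_ge0 ?invr_ge0 ?addr_ge0 // ltW.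
have : a <= S * a by rewrite ler_peMl.
lra.
Qed.

Theorem mainTheorem8 (R : realType) (k d : nat) (A : 'I_k -> 'M[nat]_d) :
  (2 <= k)%N -> (0 < d)%N -> (forall m, markov_mx (A m)) ->
  (limn_esup (fun n : nat =>
      ((ln ((num_blocks A n)%:R : R)) / ((\sum_(i < n.+1) k ^ i)%N)%:R)%:E)
   <= ((k%:R)^-1 * (ln (d%:R : R) + \sum_(m < k) ln ((opnorm (A m))%:R : R)))%:E)%E.
Proof.
move=> k_ge2 d_gt0 markovA; apply: limn_esup_le_succ => n.
rewrite lee_fin -card_Delta card_Delta_succ natrD natrM.
set S := #|{: Delta k n}|.
have S_ge1 : (1 <= S)%N by apply/card_gt0P; exists (Delta_root k n).
have ln_bound := ln_count_le R d_gt0 (fun m => opnorm_gt0 d_gt0 (markovA m))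
  (num_blocks_succ_le n markovA).
apply: le_trans (ratio_le (S := S%:R) _ _ _ _); last 4 first.
- by rewrite ler1n (leq_trans _ k_ge2).
- by rewrite ler1n.
- by rewrite ln_ge0 ?ler1n.
- by rewrite sumr_ge0 // => m _; rewrite ln_ge0 ?ler1n ?opnorm_gt0.
by rewrite ler_pM2r ?invr_gt0 ?ltr_pwDl ?mulr_ge0.
Qed.
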